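(* Let $\Phi$ be a $(3,3)$-monotone formula with $n$ clauses and $n$ variables, and let $G_\Phi$ be the graph described in the context. If $\Phi$ is 1-satisfiable, then $\mathcal{F}(\overline{G_\Phi})=\{\frac{7}{3}n\}$; if $\Phi$ is not 1-satisfiable, then $\mathcal{F}(\overline{G_\Phi})=\emptyset$.
   Context: A $(3,3)$-monotone formula is a set $C$ of clauses over a variable set $X$, where each clause consists of three distinct positive variables and each variable occurs in exactly three clauses, so $|C|=|X|=n$. It is 1-satisfiable if some truth assignment makes exactly one variable of each clause true. The graph $G_\Phi$ has $5n$ vertices: for each clause $c$ with variables $x,y,z$ (in an arbitrary fixed order) there are vertices $c(x),c(y),c(z),a_1^c,a_2^c$ forming the path $c(x)\,a_1^c\,c(y)\,a_2^c\,c(z)$; for each variable $x$ occurring in clauses $c,c',c''$, the vertices $c(x),c'(x),c''(x)$ form a triangle; there are no other edges. $\overline{G}$ denotes the complement. A colouring is a map to $\mathbb{Z}^+$ with adjacent vertices receiving distinct colours; a fall $k$-colouring is a colouring with exactly $k$ colours in which every vertex is adjacent to a vertex of every colour other than its own; $\mathcal{F}(G)$ is the set of $k$ for which $G$ has a fall $k$-colouring. *)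

From mathcomp Require Import all_boot.
Set Implicit Arguments. Unset Strict Implicit. Unset Printing Implicit Defensive.

Definition compl_rel (T : finType) (e : rel T) : rel T :=
  fun u v => (u != v) && ~~ e u v.

Definition fall_colouring (T : finType) (e : rel T) (k : nat) (f : T -> nat) : Prop :=
  [/\ (forall v, 0 < f v),
      (forall u v, e u v -> f u != f v),
      size (undup (codom f)) = k
    & (forall v u, f u != f v -> exists w, e v w && (f w == f u))].

Definition in_fall_spectrum (T : finType) (e : rel T) (k : nat) : Prop :=
  exists f : T -> nat, fall_colouring e k f.

(* Clauses indexed by 'I_n, variables by 'I_n; cl c : 'I_3 -> 'I_n lists the
   three variables of clause c in the fixed (arbitrary) order x, y, z. *)
Definition monotone33 (n : nat) (cl : 'I_n -> 'I_3 -> 'I_n) : Prop :=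
  [/\ (forall c, injective (cl c)),
      (forall x : 'I_n, #|[set c | x \in codom (cl c)]| = 3)
    & injective (fun c => [set cl c i | i in 'I_3])].               (* C is a set of clauses *)

Definition one_satisfiable (n : nat) (cl : 'I_n -> 'I_3 -> 'I_n) : Prop :=
  exists a : 'I_n -> bool, forall c, #|[set i | a (cl c i)]| = 1.

(* vertex (c, i): i = 0,1,2 are c(x), c(y), c(z); i = 3 is a_1^c; i = 4 is a_2^c *)
Definition GV (n : nat) := ('I_n * 'I_5)%type.

(* the path c(x) a1 c(y) a2 c(z), i.e. 0-3-1-4-2 *)
Definition path_edge (i j : nat) : bool :=
  [|| (i == 0) && (j == 3), (i == 3) && (j == 1),
      (i == 1) && (j == 4) | (i == 4) && (j == 2)].

Definition var_of (n : nat) (cl : 'I_n -> 'I_3 -> 'I_n) (v : GV n) : option 'I_n :=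
  if v.2 < 3 then Some (cl v.1 (inord v.2)) else None.

Definition GPhi (n : nat) (cl : 'I_n -> 'I_3 -> 'I_n) : rel (GV n) :=
  fun u v =>
    ((u.1 == v.1) && (path_edge u.2 v.2 || path_edge v.2 u.2))
    || [&& u != v, var_of cl u != None & var_of cl u == var_of cl v].

From mathcomp Require Import all_boot zify.
Set Implicit Arguments. Unset Strict Implicit. Unset Printing Implicit Defensive.

(* A fall colouring of the complement of G is a partition of V(G) into cliques
   of G, none of them contained in the closed neighbourhood of a vertex outside
   it.  In G_Phi the auxiliary vertices a_1^c, a_2^c are pairwise non-adjacent,
   so they get 2n distinct colours; each of them shares its colour with a
   neighbour on its clause path, which leaves exactly one clause vertex per
   clause whose colour is not that of an auxiliary vertex.  Call it free; the
   class of a free vertex is forced to be a whole variable triangle, so the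
   variables with free occurrences 1-satisfy Phi, and there are n free vertices
   in n/3 classes, i.e. 2n + n/3 = 7n/3 colours.  Conversely, a 1-satisfying
   assignment gives such a colouring: true occurrences are coloured by their
   variable, and in each clause the other two clause vertices share colours
   with a_1^c and a_2^c. *)

Definition colour_class (X : finType) (f : X -> nat) (v : X) : {set X} :=
  [set w | f w == f v].

Lemma colour_class_eq (X : finType) (f : X -> nat) (u v : X) :
  colour_class f u = colour_class f v <-> f u = f v.
Proof.
split=> [e|e]; last by apply/setP => w; rewrite !inE e.
have : u \in colour_class f u by rewrite inE.
by rewrite e inE => /eqP.
Qed.

Lemma count_colours (X : finType) (f : X -> nat) :
  size (undup (codom f)) = #|[set colour_class f v | v : X]|.
Proof.
pose g k := [set w | f w == k].
have g_inj : {in undup (codom f) &, injective g}.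
  move=> k1 k2; rewrite mem_undup => /codomP[v1 ->] _ e.
  have : v1 \in g (f v1) by rewrite inE.
  by rewrite e inE => /eqP.
rewrite -(size_map g) -(card_uniqP _); last by rewrite map_inj_in_uniq ?undup_uniq.
apply: eq_card => S; apply/mapP/imsetP.
  by move=> [k]; rewrite mem_undup => /codomP[v ->] ->; exists v.
by move=> [v _ ->]; exists (f v); rewrite ?mem_undup ?codom_f.
Qed.

Lemma cards3_mem (X : finType) (A : {set X}) a b c d : #|A| = 3 ->
  a \in A -> b \in A -> c \in A -> b != a -> c != a -> c != b ->
  d \in A -> [|| d == a, d == b | d == c].
Proof.
move=> cardA aA bA cA ba ca cb dA; apply/negPn/negP; rewrite !negb_or.
move=> /and3P[da db dc].
have := cardsD1 a A; rewrite aA cardA => h1.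
have := cardsD1 b (A :\ a); rewrite !inE ba bA /= => h2.
have := cardsD1 c (A :\ a :\ b); rewrite !inE cb ca cA /= => h3.
have /cards0_eq/setP/(_ d) : #|A :\ a :\ b :\ c| = 0 by lia.
by rewrite !inE dc db da dA.
Qed.

Lemma compl_colour_witness (T : finType) (e : rel T) (f : T -> nat) u v w :
  f u != f v -> f w = f u -> ~~ e v w -> compl_rel e v w && (f w == f u).
Proof.
move=> fuv fw nvw; rewrite /compl_rel nvw fw eqxx !andbT.
by apply: contraNneq fuv => vw; rewrite -fw vw.
Qed.

Section ComplementFallColouring.
Variables (T : finType) (e : rel T) (f : T -> nat).
Hypothesis e_irr : irreflexive e.
Hypothesis e_sym : symmetric e.
Hypothesis f_proper : forall u v, compl_rel e u v -> f u != f v.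
Hypothesis f_fall : forall v u, f u != f v -> exists w, compl_rel e v w && (f w == f u).

Lemma same_colour_adj u v : u != v -> f u = f v -> e u v.
Proof.
move=> uv fuv; apply/negPn/negP => nuv.
by have := f_proper (u := u) (v := v); rewrite /compl_rel uv nuv fuv eqxx => /(_ isT).
Qed.

(* A singleton colour class {u} would lie in the closed neighbourhood of any
   neighbour of u. *)
Lemma colour_class_nontrivial u v : e u v -> exists2 w, w != u & f w = f u.
Proof.
move=> uv; have [fuv|fuv] := eqVneq (f u) (f v).
  by exists v; [apply: contraTneq uv => ->; rewrite e_irr | rewrite fuv].
have [w /andP[/andP[_ nvw] /eqP fw]] := f_fall fuv.
by exists w => //; apply: contraNneq nvw => ->; rewrite e_sym.
Qed.

End ComplementFallColouring.

Definition aux1 : 'I_5 := @Ordinal 5 3 isT.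
Definition aux2 : 'I_5 := @Ordinal 5 4 isT.

Lemma path_edge_irr i : path_edge i i = false.
Proof. by case: i => [|[|[|[|[|i]]]]]. Qed.

Lemma path_edge_lt3 i j : i < 3 -> j < 3 -> path_edge i j = false.
Proof. by case: i => [|[|[|i]]] //; case: j => [|[|[|j]]]. Qed.

Lemma path_edge_aux i j : 3 <= i < 5 -> 3 <= j < 5 -> path_edge i j = false.
Proof. by case: i => [|[|[|[|[|i]]]]] //; case: j => [|[|[|[|[|j]]]]]. Qed.

Lemma path_adj_lt3 i j : i < 3 -> path_edge i j || path_edge j i -> (j == 3) || (j == 4).
Proof. by case: i => [|[|[|i]]] //; case: j => [|[|[|[|[|j]]]]]. Qed.

Lemma path_adj3 i : path_edge i 3 || path_edge 3 i -> (i == 0) || (i == 1).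
Proof. by case: i => [|[|[|[|[|i]]]]]. Qed.

Lemma path_adj4 i : path_edge i 4 || path_edge 4 i -> (i == 1) || (i == 2).
Proof. by case: i => [|[|[|[|[|i]]]]]. Qed.

Lemma path_adj_aux i k : 3 <= k -> path_edge i k || path_edge k i -> i < 3.
Proof. by case: i => [|[|[|[|[|i]]]]] //; case: k => [|[|[|[|[|k]]]]]. Qed.

Lemma third_pos i1 i2 j : i1 < 2 -> 0 < i2 < 3 -> i1 != i2 -> j < 5 ->
  [&& j < 3, j != i1 & j != i2] = (j == 3 - i1 - i2).
Proof.
by case: i1 => [|[|i1]] //; case: i2 => [|[|[|i2]]] //; case: j => [|[|[|[|[|j]]]]].
Qed.

(* Colour offset of position i in a clause whose true position is r: 0 for the
   true occurrence, 1 for a_1 and the false occurrence on its side of the path,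
   2 for a_2 and the remaining one. *)
Definition slot (r i : nat) : nat :=
  if i == 3 then 1 else if i == 4 then 2 else if i == r then 0
  else if i == 0 then 1 else if i == 2 then 2 else if r == 0 then 1 else 2.

Definition slot_mate (r s : nat) : nat :=
  if s == 1 then (if r == 0 then 1 else 0) else (if r == 2 then 1 else 2).

Lemma slot_eq0 r i : r < 3 -> i < 5 -> (slot r i == 0) = (i == r).
Proof. by case: r => [|[|[|r]]] //; case: i => [|[|[|[|[|i]]]]]. Qed.

Lemma slot_le2 r i : slot r i <= 2.
Proof. by rewrite /slot; repeat case: ifP. Qed.

Lemma slot_path_adj r i j : r < 3 -> i < 5 -> j < 5 -> i != j ->
  slot r i = slot r j -> slot r i != 0 -> path_edge i j || path_edge j i.
Proof.
by case: r => [|[|[|r]]] //; case: i => [|[|[|[|[|i]]]]] //; case: j => [|[|[|[|[|j]]]]].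
Qed.

Lemma slot_mateP r s : r < 3 -> 0 < s < 3 ->
  [/\ slot r (2 + s) = s, slot r (slot_mate r s) = s & slot_mate r s < 3].
Proof. by case: r => [|[|[|r]]] //; case: s => [|[|[|s]]]. Qed.

Section GPhi.
Variables (n : nat) (cl : 'I_n -> 'I_3 -> 'I_n).
Hypothesis cl_mon : monotone33 cl.

Local Notation T := (GV n).
Local Notation G := (GPhi cl).
Local Notation H := (compl_rel (GPhi cl)).

Definition var_at (v : T) : 'I_n := cl v.1 (inord v.2).

Lemma GPhiE (u v : T) : G u v =
  ((u.1 == v.1) && (path_edge u.2 v.2 || path_edge v.2 u.2))
  || [&& u != v, u.2 < 3, v.2 < 3 & var_at u == var_at v].
Proof.
by rewrite /GPhi /var_of /var_at; case: (u.2 < 3); case: (v.2 < 3); rewrite ?andbF ?andbT.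
Qed.

Lemma GPhi_irr : irreflexive G.
Proof. by move=> u; rewrite GPhiE !eqxx path_edge_irr. Qed.

Lemma GPhi_sym : symmetric G.
Proof.
move=> u v; rewrite !GPhiE (eq_sym v.1) (orbC (path_edge v.2 _)) (eq_sym v).
by rewrite (eq_sym (var_at v)); case: (u.2 < 3); case: (v.2 < 3); rewrite ?andbF.
Qed.

Lemma cl_inord_inj c (i j : 'I_5) :
  i < 3 -> j < 3 -> cl c (inord i) = cl c (inord j) -> i = j.
Proof.
case: cl_mon => cl_inj _ _ i3 j3 /cl_inj /(congr1 val).
by rewrite /= !inordK // => /val_inj.
Qed.

Lemma GPhi_same_clause c (i j : 'I_5) :
  i != j -> G (c, i) (c, j) = path_edge i j || path_edge j i.
Proof.
move=> ij; rewrite GPhiE /= eqxx /=; case E: [&& _, _, _ & _]; last by rewrite orbF.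
move/and4P: E => [_ i3 j3 /eqP /(cl_inord_inj i3 j3) eij].
by rewrite eij eqxx in ij.
Qed.

Lemma GPhi_occP (u w : T) : u.2 < 3 -> G u w ->
  [\/ w = (u.1, aux1), w = (u.1, aux2) | [/\ w != u, w.2 < 3 & var_at w = var_at u]].
Proof.
move=> u3; rewrite GPhiE => /orP[/andP[/eqP e1 adj]|/and4P[uw _ w3 /eqP e]].
  have := path_adj_lt3 u3 adj; case: w e1 {adj} => c j /= -> /orP[] /eqP ej.
    by apply: Or31; congr pair; apply: val_inj.
  by apply: Or32; congr pair; apply: val_inj.
by apply: Or33; split; rewrite // eq_sym.
Qed.

Lemma GPhi_aux1 (w : T) c :
  G w (c, aux1) -> w.1 = c /\ ((w.2 == 0 :> nat) || (w.2 == 1 :> nat)).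
Proof. by rewrite GPhiE /= !andbF orbF => /andP[/eqP -> /path_adj3]. Qed.

Lemma GPhi_aux2 (w : T) c :
  G w (c, aux2) -> w.1 = c /\ ((w.2 == 1 :> nat) || (w.2 == 2 :> nat)).
Proof. by rewrite GPhiE /= !andbF orbF => /andP[/eqP -> /path_adj4]. Qed.

Lemma GPhi_clause_nb (u : T) : u.2 < 3 -> exists v, G u v.
Proof.
case: u => c [[|[|[|i]]] i5] //= _.
- by exists (c, aux1); rewrite GPhi_same_clause.
- by exists (c, aux1); rewrite GPhi_same_clause.
- by exists (c, aux2); rewrite GPhi_same_clause.
Qed.

Definition occ (x : 'I_n) : {set T} := [set v : T | (v.2 < 3) && (var_at v == x)].

Lemma card_occ x : #|occ x| = 3.
Proof.
case: cl_mon => _ cl_occ3 _; rewrite -{}[RHS](cl_occ3 x) -(card_in_imset (f := fst)).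
  apply: eq_card => c; rewrite inE; apply/imsetP/idP.
    by move=> [v]; rewrite inE => /andP[_ /eqP <-] ->; exact: codom_f.
  move=> /codomP[i ->]; exists (c, widen_ord (isT : 3 <= 5) i) => //.
  by rewrite inE /= ltn_ord /var_at /= inord_val eqxx.
move=> [c i] [d j]; rewrite !inE /= => /andP[i3 /eqP <-] /andP[j3 /eqP].
by move=> + ecd; rewrite -ecd /var_at /= => /esym/(cl_inord_inj i3 j3) ->.
Qed.

Section FallToSatisfying.
Variable f : T -> nat.
Hypothesis f_proper : forall u v, H u v -> f u != f v.
Hypothesis f_fall : forall v u, f u != f v -> exists w, H v w && (f w == f u).

Let colour_adj := same_colour_adj f_proper.
Let colour_mate := colour_class_nontrivial GPhi_irr GPhi_sym f_fall.

(* Free vertices are the occurrences that will be read as true. *)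
Definition free (u : T) := [&& u.2 < 3, f u != f (u.1, aux1) & f u != f (u.1, aux2)].

Lemma free_lt3 u : free u -> u.2 < 3.
Proof. by case/and3P. Qed.

Lemma free_same_colour (u t : T) : free u -> t.2 < 3 -> f t = f u -> free t.
Proof.
move=> /and3P[u3 fu1 fu2] t3 ftu; rewrite /free t3 /=.
have ut (k : 'I_5) : 3 <= k -> u != (t.1, k).
  by move=> k3; apply: contraTneq u3 => ->; rewrite -leqNgt.
apply/andP; split; apply/eqP => e.
  have [e1 _] := GPhi_aux1 (colour_adj (ut aux1 isT) (etrans (esym ftu) e)).
  by move: fu1; rewrite e1 -ftu e eqxx.
have [e2 _] := GPhi_aux2 (colour_adj (ut aux2 isT) (etrans (esym ftu) e)).
by move: fu2; rewrite e2 -ftu e eqxx.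
Qed.

Lemma free_colour_mate (u w : T) :
  free u -> w != u -> f w = f u -> w.2 < 3 /\ var_at w = var_at u.
Proof.
move=> fu wu fw; have /and3P[u3 fu1 fu2] := fu.
have /(GPhi_occP u3) : G u w by rewrite GPhi_sym; apply: colour_adj.
by case=> [e|e|[]//]; rewrite e in fw; [move: fu1 | move: fu2]; rewrite -fw eqxx.
Qed.

(* If t had another colour, the fall condition at t would give a vertex of the
   class of u outside N[t]; together with u and the mate of u this would be a
   fourth vertex of the variable triangle. *)
Lemma free_occ_colour (u t : T) : free u -> t.2 < 3 -> var_at t = var_at u -> f t = f u.
Proof.
move=> fu t3 tx; have [->//|tu] := eqVneq t u.
have u3 := free_lt3 fu.
have [v uv] := GPhi_clause_nb u3.
have [w wu fw] := colour_mate uv.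
have [w3 wx] := free_colour_mate fu wu fw.
have [->//|tw] := eqVneq t w.
apply/eqP/negPn/negP; rewrite eq_sym => ftu.
have [w' /andP[/andP[tw' ntw'] /eqP fw']] := f_fall ftu.
have adj_t (z : T) : z != t -> z.2 < 3 -> var_at z = var_at u -> G t z.
  by move=> zt z3 zx; rewrite GPhiE (eq_sym t) zt t3 z3 tx zx eqxx orbT.
have w'u : w' != u by apply: contraNneq ntw' => ->; rewrite adj_t // eq_sym.
have w'w : w' != w by apply: contraNneq ntw' => ->; rewrite adj_t // eq_sym.
have [w'3 w'x] := free_colour_mate fu w'u fw'.
have in_occ (z : T) : z.2 < 3 -> var_at z = var_at u -> z \in occ (var_at u).
  by move=> z3 zx; rewrite inE z3 zx eqxx.
have := cards3_mem (card_occ (var_at u)) (in_occ _ u3 erefl) (in_occ _ w3 wx)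
  (in_occ _ t3 tx) wu tu tw (in_occ _ w'3 w'x).
by rewrite (negbTE w'u) (negbTE w'w) eq_sym (negbTE tw').
Qed.

Lemma free_occ (u t : T) : free u -> t.2 < 3 -> var_at t = var_at u -> free t.
Proof. by move=> fu t3 tx; apply: (free_same_colour fu t3); apply: free_occ_colour. Qed.

(* a_1^c and a_2^c have distinct colours, each shared with a different clause
   vertex of c; the remaining clause vertex is the free one. *)
Lemma clause_free_pos c :
  exists2 r, r < 3 & forall j : 'I_5, free (c, j) = (j == r :> nat).
Proof.
have aux1_nb : G (c, aux1) (c, @Ordinal 5 0 isT) by rewrite GPhi_same_clause.
have aux2_nb : G (c, aux2) (c, @Ordinal 5 2 isT) by rewrite GPhi_same_clause.
have [p1 p1_1 fp1] := colour_mate aux1_nb.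
have [p2 p2_2 fp2] := colour_mate aux2_nb.
have [e1 i1_pos] := GPhi_aux1 (colour_adj p1_1 fp1).
have [e2 i2_pos] := GPhi_aux2 (colour_adj p2_2 fp2).
have f12 : f (c, aux1) != f (c, aux2).
  by apply: f_proper; rewrite /compl_rel GPhi_same_clause // xpair_eqE eqxx.
case: p1 e1 i1_pos fp1 {p1_1} => _ i1 /= -> i1_pos fp1.
case: p2 e2 i2_pos fp2 {p2_2} => _ i2 /= -> i2_pos fp2.
have i12 : i1 != i2 :> nat.
  by apply: contra_neq f12 => /val_inj e; rewrite -fp1 -fp2 e.
have i1_lt : i1 < 2 by case/orP: i1_pos => /eqP ->.
have i2_lt : 0 < i2 < 3 by case/orP: i2_pos => /eqP ->.
exists (3 - i1 - i2); first lia.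
move=> j; rewrite -third_pos ?ltn_ord //.
have same_pos (k : 'I_5) ok : k < 3 -> f (c, k) = f (c, ok) -> j < 3 ->
    (f (c, j) == f (c, ok)) = (j == k :> nat).
  move=> k3 fk j3; apply/eqP/eqP => [e|/val_inj ->//].
  have [->//|jk] := eqVneq j k.
  have /colour_adj : (c, j) != (c, k) by rewrite xpair_eqE eqxx.
  by rewrite GPhi_same_clause // !path_edge_lt3 // e fk => /(_ erefl).
rewrite /free /=; case j3 : (j < 3) => //=.
by rewrite (same_pos i1) ?(same_pos i2) //; lia.
Qed.

Lemma fall_one_satisfiable : one_satisfiable cl.
Proof.
exists (fun x => [exists v, free v && (var_at v == x)]) => c.
have [r r3 free_r] := clause_free_pos c.
apply/eqP/cards1P; exists (inord r); apply/setP => i; rewrite !inE.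
have -> : [exists v, free v && (var_at v == cl c i)] = free (c, widen_ord (isT : 3 <= 5) i).
  apply/existsP/idP => [[v /andP[fv /eqP vx]]|fi].
    apply: (free_occ fv); first exact: ltn_ord i.
    by rewrite vx /var_at /= inord_val.
  by exists (c, widen_ord (isT : 3 <= 5) i); rewrite fi /var_at /= inord_val eqxx.
by rewrite free_r -(inj_eq val_inj) /= inordK.
Qed.

Definition aux_vertices := [set v : T | 3 <= v.2].
Definition free_vertices := [set v : T | free v].

Local Notation cls := (colour_class f).

Lemma colour_classes_split :
  [set cls v | v : T] = cls @: aux_vertices :|: cls @: free_vertices.
Proof.
apply/setP => C; rewrite inE; apply/imsetP/orP => [[v _ ->]|]; last first.
  by case=> /imsetP[v _ ->]; exists v.
have [v3|v3] := leqP 3 v.2; first by left; apply/imsetP; exists v; rewrite ?inE.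
case fv: (free v); first by right; apply/imsetP; exists v; rewrite ?inE.
left; move/negbT: fv; rewrite /free v3 /= negb_and !negbK => /orP[] /eqP e.
  by apply/imsetP; exists (v.1, aux1); rewrite ?inE //; apply/colour_class_eq.
by apply/imsetP; exists (v.1, aux2); rewrite ?inE //; apply/colour_class_eq.
Qed.

Lemma aux_free_classes_disjoint :
  cls @: aux_vertices :&: cls @: free_vertices = set0.
Proof.
apply/setP => C; rewrite !inE; apply/negbTE/negP.
case/andP=> /imsetP[a + ->] /imsetP[u + /colour_class_eq fe]; rewrite !inE => a3 fu.
have au : a != u by apply: contraTneq a3 => ->; rewrite -ltnNge free_lt3.
by have [+ _] := free_colour_mate fu au fe; rewrite ltnNge a3.
Qed.

Lemma card_aux_classes : #|cls @: aux_vertices| = 2 * n.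
Proof.
rewrite card_in_imset => [|a b]; last first.
  rewrite !inE => a3 b3 /colour_class_eq fab; apply/eqP/negP => /negP ab.
  have := colour_adj ab fab.
  by rewrite GPhiE !path_edge_aux ?ltn_ord ?a3 ?b3 // andbF /= ltnNge a3 andbF.
have -> : aux_vertices = setX [set: 'I_n] [set aux1; aux2].
  by apply/setP => -[c [[|[|[|[|[|i]]]]] i5]]; rewrite !inE.
by rewrite cardsX cardsT card_ord cards2 mulnC.
Qed.

Lemma card_free_vertices : #|free_vertices| = n.
Proof.
rewrite -(card_in_imset (f := fst)) => [|[c i] [d j]].
  have -> : fst @: free_vertices = [set: 'I_n].
    apply/setP => c; rewrite inE; apply/imsetP.
    have [r r3 free_r] := clause_free_pos c.
    by exists (c, inord r) => //; rewrite inE free_r /= inordK //; lia.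
  by rewrite cardsT card_ord.
rewrite !inE /= => + + ecd; rewrite -ecd.
have [r _ free_r] := clause_free_pos c.
by rewrite !free_r => /eqP ei /eqP ej; congr pair; apply: val_inj; rewrite /= ei ej.
Qed.

Lemma card_free_classes : 3 * #|cls @: free_vertices| = #|free_vertices|.
Proof.
rewrite -[#|free_vertices|]sum1_card (partition_big_imset cls) /= mulnC -sum_nat_const.
apply: eq_bigr => C /imsetP[u + ->]; rewrite inE => fu.
rewrite sum1dep_card; transitivity #|occ (var_at u)|; first exact/esym/card_occ.
apply: eq_card => v.
rewrite !inE; apply/andP/andP => [[v3 /eqP vx]|[fv /eqP /colour_class_eq fe]].
  by split; [exact: free_occ fu v3 vx | apply/eqP/colour_class_eq/free_occ_colour].
have [->|vu] := eqVneq v u; first by rewrite free_lt3 // eqxx.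
by have [-> ->] := free_colour_mate fu vu fe.
Qed.

Lemma fall_colour_count : 3 * size (undup (codom f)) = 7 * n.
Proof.
rewrite count_colours colour_classes_split cardsU aux_free_classes_disjoint.
by rewrite cards0 subn0 card_aux_classes mulnDr card_free_classes card_free_vertices; lia.
Qed.

End FallToSatisfying.

Section SatisfyingToFall.
Variable a : 'I_n -> bool.
Hypothesis a_sat : forall c, #|[set i | a (cl c i)]| = 1.

Definition true_pos (c : 'I_n) : 'I_3 := odflt ord0 [pick i : 'I_3 | a (cl c i)].

Lemma true_posE c i : a (cl c i) = (i == true_pos c).
Proof.
have /eqP/cards1P[i0 /setP true_i0] := a_sat c.
have true_mem j : a (cl c j) = (j == i0) by have := true_i0 j; rewrite !inE.
rewrite /true_pos; case: pickP => [j|none]; last by have := none i0; rewrite true_mem eqxx.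
by rewrite !true_mem => /eqP ->.
Qed.

(* Colours 2c+1, 2c+2 are private to clause c; true occurrences of x get
   2n+1+x, above all of them. *)
Definition sat_colour (v : T) : nat :=
  if slot (true_pos v.1) v.2 == 0 then 2 * n + 1 + var_at v
  else 2 * v.1 + slot (true_pos v.1) v.2.

Lemma slot_true (v : T) : v.2 < 3 -> a (var_at v) = (slot (true_pos v.1) v.2 == 0).
Proof.
move=> v3; rewrite slot_eq0 ?ltn_ord // /var_at true_posE -(inj_eq val_inj).
by rewrite /= inordK.
Qed.

Lemma slot0_lt3 (v : T) : slot (true_pos v.1) v.2 == 0 -> v.2 < 3.
Proof. by rewrite slot_eq0 ?ltn_ord // => /eqP ->. Qed.

Lemma sat_colour_pos v : 0 < sat_colour v.
Proof. by rewrite /sat_colour; case: eqP => //; lia. Qed.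

Lemma sat_colour_true (w : T) : w.2 < 3 -> a (var_at w) -> sat_colour w = 2 * n + 1 + var_at w.
Proof. by move=> w3; rewrite slot_true // /sat_colour => ->. Qed.

Lemma sat_colour_adj (u v : T) : u != v -> sat_colour u = sat_colour v -> G u v.
Proof.
case: u => cu iu; case: v => cv iv uv; rewrite /sat_colour /=.
have := slot_le2 (true_pos cu) iu; have := slot_le2 (true_pos cv) iv.
have := ltn_ord cu; have := ltn_ord cv.
case su: (slot (true_pos cu) iu == 0); case sv: (slot (true_pos cv) iv == 0).
- move=> _ _ _ _ /addnI /val_inj exy.
  rewrite GPhiE uv (slot0_lt3 (v := (cu, iu)) su) (slot0_lt3 (v := (cv, iv)) sv).
  by rewrite exy eqxx orbT.
- by move=> *; lia.
- by move=> *; lia.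
move=> cv_lt cu_lt sv2 su2 e.
move/negbT/eqP: su => su; move/negbT/eqP: sv => sv.
have ecu : cu = cv by apply: ord_inj; lia.
subst cv; have iuv : iu != iv by apply: contraNneq uv => ->.
rewrite GPhi_same_clause //; apply: (slot_path_adj (r := true_pos cu)) => //.
  lia.
exact/eqP.
Qed.

(* A true occurrence of x has two more occurrences in other clauses, and v is
   adjacent to at most one of them since v is not coloured 2n+1+x. *)
Lemma sat_colour_fall_true v u : sat_colour u != sat_colour v ->
  slot (true_pos u.1) u.2 == 0 -> exists w, H v w && (sat_colour w == sat_colour u).
Proof.
move=> fuv su; have u3 := slot0_lt3 su.
have ax : a (var_at u) by rewrite slot_true.
have fu := sat_colour_true u3 ax.
case: cl_mon => _ cl_occ3 _.
have : 1 < #|[set c | var_at u \in codom (cl c)]| by rewrite cl_occ3.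
case/card_gt1P => c1 [c2 []]; rewrite !inE => /codomP[i1 e1] /codomP[i2 e2] c12.
pose w1 : T := (c1, widen_ord (isT : 3 <= 5) i1).
pose w2 : T := (c2, widen_ord (isT : 3 <= 5) i2).
have w1x : var_at w1 = var_at u by rewrite /var_at /= inord_val -e1.
have w2x : var_at w2 = var_at u by rewrite /var_at /= inord_val -e2.
have fw1 : sat_colour w1 = sat_colour u.
  by rewrite sat_colour_true ?w1x ?ax ?fu //=; exact: ltn_ord.
have fw2 : sat_colour w2 = sat_colour u.
  by rewrite sat_colour_true ?w2x ?ax ?fu //=; exact: ltn_ord.
have same_clause (w : T) : w.2 < 3 -> var_at w = var_at u -> G v w -> v.1 = w.1.
  move=> w3 wx; rewrite GPhiE => /orP[/andP[/eqP -> _] //|/and4P[_ v3 _ /eqP vx]].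
  by move: fuv; rewrite fu sat_colour_true ?vx ?wx ?eqxx.
case G1: (G v w1); last by exists w1; rewrite compl_colour_witness ?G1.
case G2: (G v w2); last by exists w2; rewrite compl_colour_witness ?G2.
have := same_clause w1 (ltn_ord i1) w1x G1; have := same_clause w2 (ltn_ord i2) w2x G2.
by move=> -> /= e; rewrite e eqxx in c12.
Qed.

(* In clause c the colour 2c+s sits on the auxiliary vertex a_s^c and on a clause
   vertex; v cannot be adjacent to both, as a clause vertex of c adjacent to
   a_s^c lies on another variable triangle than its slot mate. *)
Lemma sat_colour_fall_false v u : sat_colour u != sat_colour v ->
  slot (true_pos u.1) u.2 != 0 -> exists w, H v w && (sat_colour w == sat_colour u).
Proof.
move=> fuv su; set c := u.1; set r := true_pos c; set s := slot r u.2.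
have s_pos : 0 < s by rewrite lt0n.
have s2 := slot_le2 r u.2.
have [slot_aux slot_of_mate mate3] := slot_mateP (ltn_ord r) (s := s) (ltac:(lia)).
have fu : sat_colour u = 2 * c + s by rewrite /sat_colour (negbTE su).
pose w1 : T := (c, inord (2 + s)).
pose w2 : T := (c, inord (slot_mate r s)).
have w1_pos : w1.2 = 2 + s :> nat by rewrite /= inordK //; lia.
have w2_pos : w2.2 = slot_mate r s :> nat by rewrite /= inordK //; lia.
have fw1 : sat_colour w1 = sat_colour u.
  by rewrite fu /sat_colour /= w1_pos slot_aux; case: eqP => //; lia.
have fw2 : sat_colour w2 = sat_colour u.
  by rewrite fu /sat_colour /= w2_pos slot_of_mate; case: eqP => //; lia.
case G1: (G v w1); last by exists w1; rewrite compl_colour_witness ?G1.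
exists w2; rewrite compl_colour_witness //.
have vw2 : v != w2 by apply: contraNneq fuv => ->; rewrite fw2.
move: G1; rewrite GPhiE => /orP[/andP[/eqP e adj]|/and4P[_ _]]; last by rewrite w1_pos; lia.
have v3 : v.2 < 3 by apply: (path_adj_aux (k := 2 + s)); rewrite // -w1_pos.
have w2_3 : w2.2 < 3 by rewrite w2_pos.
rewrite GPhiE e eqxx andTb !path_edge_lt3 // vw2 v3 w2_3 /=.
apply: contraNneq vw2 => vx.
have e2 : v.2 = w2.2 by apply: (cl_inord_inj (c := c)) => //; move: vx; rewrite /var_at e.
by case: v e e2 {fuv vx adj v3} => cv iv /= -> ->.
Qed.

Lemma sat_fall_colouring :
  fall_colouring H (size (undup (codom sat_colour))) sat_colour.
Proof.
split=> //; first exact: sat_colour_pos.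
  move=> u v /andP[uv nuv]; apply: contraNneq nuv => e; exact: sat_colour_adj uv e.
move=> v u fuv; have [su|su] := boolP (slot (true_pos u.1) u.2 == 0).
  exact: sat_colour_fall_true.
exact: sat_colour_fall_false.
Qed.

End SatisfyingToFall.

End GPhi.

Theorem mainTheorem20 (n : nat) (cl : 'I_n -> 'I_3 -> 'I_n) :
  monotone33 cl ->
  (one_satisfiable cl ->
     forall k : nat, in_fall_spectrum (compl_rel (GPhi cl)) k <-> 3 * k = 7 * n) /\
  (~ one_satisfiable cl ->
     forall k : nat, ~ in_fall_spectrum (compl_rel (GPhi cl)) k).
Proof.
move=> cl_mon; split.
- move=> [a a_sat] k; split.
  + move=> [f [_ f_proper <- f_fall]]; exact: (fall_colour_count cl_mon f_proper f_fall).
  + have [f_pos f_proper _ f_fall] := sat_fall_colouring cl_mon a_sat.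
    have count3 := fall_colour_count cl_mon f_proper f_fall.
    by move=> k3; exists (sat_colour cl a); split => //; lia.
- move=> unsat k [f [_ f_proper _ f_fall]]; apply: unsat.
  exact: (fall_one_satisfiable cl_mon f_proper f_fall).
Qed.
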